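(* Let $p$ be prime and $H\le\mathrm{S}_n$ be in $\mathfrak{InP}(\mathrm{C}_p)$ with $|H|=p^s$, and let $M\in\mathrm{M}(s,k,p)$ be a generator matrix of $\gamma(H)$ in standard form. Fix $m\in\{s,s+1,\dots,k-1\}$ and let $J=\{1,2,\dots,m\}\,\dot\cup\,\{u\}\subseteq\{1,\dots,k\}$. Let $f:J\to\{1,\dots,k\}$ be an injection. If there exists $i\in\{1,\dots,s\}$ such that $M_{i,f(u)}\ne0$ and $M_{i,f(j)}M_{j,u}=0$ for all $j\in J\cap\{1,\dots,s\}$, then there is no $\nu\in N_{\mathrm{S}_n}(H)$ with $\Omega_j^\nu=\Omega_{f(j)}$ for all $j\in J$.
   Context: $H\le\mathrm{S}_{n}$, $n=pk$, has orbits $\Omega_1,\dots,\Omega_k$ of size $p$ with each $G_i:=H|_{\Omega_i}$ cyclic of order $p$, ordered so that $|H|_{\Omega_1\cup\dots\cup\Omega_s}|=p^s$. $G=G_1\times\dots\times G_k$, $g_1$ generates $G_1$, $g_i$ is the conjugate of $g_1$ by the involution interchanging $\Omega_1$ and $\Omega_i$ via a bijection witnessing a permutation isomorphism $G_1\to G_i$, and $\gamma:G\to\mathbb{F}_p^k$ is $\gamma(g_1^{r_1}\cdots g_k^{r_k})=(r_1,\dots,r_k)$. $M_{i,j}$ denotes the $(i,j)$ entry; standard form means the first $s$ columns of $M$ form the identity $I_s$; the rows of $M$ form a basis of $\gamma(H)$. *)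

From mathcomp Require Import all_boot all_order all_algebra all_fingroup all_solvable.
Set Implicit Arguments. Unset Strict Implicit. Unset Printing Implicit Defensive.
Import GRing.Theory.
Local Open Scope group_scope.

Definition restrG (n : nat) (H : {group {perm 'I_n}}) (Om : {set 'I_n}) :=
  restr_perm Om @* H.

Definition in_gammaH (p n k : nat) (g : 'I_k -> {perm 'I_n})
    (H : {group {perm 'I_n}}) (r : 'rV['F_p]_k) : Prop :=
  (\prod_(i < k) g i ^+ (nat_of_ord (r ord0 i))) \in H.

From mathcomp Require Import all_boot all_order all_algebra all_fingroup all_solvable.
Import GRing.Theory.

Set Implicit Arguments.
Unset Strict Implicit.

(* Row [i] of [M] gives an element [h] of [H] acting on each orbit [Om t] as
   [g_t ^+ M_(i,t)].  If [nu] normalises [H], then [x := h ^ nu^-1] lies in [H],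
   and [x] fixes [Om j] pointwise iff [h] fixes [Om (f j)] pointwise.  Reading off
   the exponent vector [v] of [x] in [gamma(H)], standard form gives
   [v_u = \sum_(l < s) v_l M_(l,u)], and every term vanishes: either
   [M_(i,f l) = 0], so [h] fixes [Om (f l)] and [v_l = 0], or [M_(l,u) = 0].
   Hence [x] fixes [Om u], so [h] fixes [Om (f u)], i.e. [M_(i,f u) = 0]. *)

Section DisjointSupportProduct.

Variables (I T : finType) (Om : I -> {set T}) (h : I -> {perm T}).
Hypothesis Om_disjoint : forall a b z, z \in Om a -> z \in Om b -> a = b.
Hypothesis h_on : forall j, perm_on (Om j) (h j).

Lemma prod_perm_out (z : T) (r : seq I) :
  (forall j, j \in r -> z \notin Om j) -> (\prod_(j <- r) h j)%g z = z.
Proof.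
elim: r => [|a r IH] zr; first by rewrite big_nil perm1.
rewrite big_cons permM (out_perm (h_on a)) ?zr ?mem_head //.
by apply: IH => j jr; rewrite zr // in_cons jr orbT.
Qed.

Lemma prod_perm_seq_on (t : I) (y : T) (r : seq I) : y \in Om t -> uniq r ->
  (\prod_(j <- r) h j)%g y = if t \in r then h t y else y.
Proof.
move=> yt; elim: r => [|a r IH] /=; first by rewrite big_nil perm1.
case/andP=> ar ur; rewrite big_cons permM in_cons.
have [ta|ta] /= := eqVneq t a.
  rewrite -ta; have hty : h t y \in Om t by rewrite (perm_closed _ (h_on t)).
  apply: prod_perm_out => j jr; apply: contraNN ar => haj.
  by rewrite -ta (Om_disjoint hty haj).
rewrite (out_perm (h_on a)) ?IH //.
by apply: contra ta => ya; rewrite (Om_disjoint yt ya).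
Qed.

Lemma prod_perm_on (t : I) (y : T) :
  y \in Om t -> (\prod_j h j)%g y = h t y.
Proof.
by move=> yt; rewrite (prod_perm_seq_on yt (index_enum_uniq I)) mem_index_enum.
Qed.

End DisjointSupportProduct.

Lemma astab_conjgV (T : finType) (nu h : {perm T}) (A : {set T}) :
  ((h ^ nu^-1)%g \in 'C(A | 'P)%g) = (h \in 'C(nu @: A | 'P)%g).
Proof. by rewrite -[nu @: A]/(('P^* A nu)%act) astab_setact mem_conjg. Qed.

Lemma std_form_submxE (F : fieldType) (s k : nat) (sk : (s <= k)%N)
    (M : 'M[F]_(s, k)) (v : 'rV[F]_k) :
  (forall (i : 'I_s) (j : 'I_k), (val j < s)%N -> M i j = ((val i == val j)%:R)%R) ->
  (v <= M)%MS -> forall j, v ord0 j = (\sum_(l < s) v ord0 (widen_ord sk l) * M l j)%R.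
Proof.
move=> Mstd /submxP [a ->] j; rewrite mxE; apply: eq_bigr => l _; congr (_ * _)%R.
rewrite mxE (bigD1 l) //= Mstd //= eqxx mulr1 big1 ?addr0 // => l' l'l.
by rewrite Mstd //= (inj_eq val_inj) (negbTE l'l) mulr0.
Qed.

Section CyclicOrbits.

Variables (p n k : nat) (H : {group {perm 'I_n}}).
Variables (Om : 'I_k -> {set 'I_n}) (g : 'I_k -> {perm 'I_n}).
Hypothesis p_pr : prime p.
Hypothesis Om_inj : injective Om.
Hypothesis Om_cover : forall x : 'I_n, exists i, x \in Om i.
Hypothesis Om_orbit : forall i x, x \in Om i -> orbit 'P H x = Om i.
Hypothesis restrG_card : forall i, #|restrG H (Om i)| = p.
Hypothesis cycle_g : forall i, <[g i]>%g = restrG H (Om i).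

Lemma Om_disjoint a b y : y \in Om a -> y \in Om b -> a = b.
Proof. by move=> ya yb; apply: Om_inj; rewrite -(Om_orbit ya) -(Om_orbit yb). Qed.

Lemma orbit_astabs x j : x \in H -> x \in 'N(Om j | 'P)%g.
Proof.
move=> xH; apply/astabsP => y /=; rewrite apermE.
apply/idP/idP => [xy | yj]; last by rewrite -(Om_orbit yj); apply/orbitP; exists x.
by rewrite -(Om_orbit xy); apply/orbitP; exists x^-1%g; rewrite ?groupV //= apermE permK.
Qed.

Lemma expg_perm_on j e : perm_on (Om j) (g j ^+ e)%g.
Proof.
have : (g j ^+ e)%g \in restrG H (Om j) by rewrite -cycle_g mem_cycle.
by case/morphimP => a _ _ ->; apply: restr_perm_on.
Qed.

Lemma order_g j : #[g j]%g = p.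
Proof. by rewrite /order cycle_g restrG_card. Qed.

Lemma restr_orbit_expg x j : x \in H ->
  exists c : 'F_p, {in Om j, x =1 (g j ^+ c)%g}.
Proof.
move=> xH; have : restr_perm (Om j) x \in <[g j]>%g.
  by rewrite cycle_g mem_morphim // orbit_astabs.
case/cycleP => e xe; exists (inZp e) => y yj.
by rewrite -(restr_permE (orbit_astabs j xH) yj) xe -expg_mod_order order_g /= Fp_cast.
Qed.

Lemma astab_orbit_expg (x : {perm 'I_n}) j (c : 'F_p) :
  {in Om j, x =1 (g j ^+ c)%g} -> (x \in 'C(Om j | 'P)%g) = (c == 0%R).
Proof.
move=> xc; have c_lt_p : (c < p)%N by rewrite -[p in (_ < p)%N](Fp_cast p_pr).
have -> : (x \in 'C(Om j | 'P)%g) = ((g j ^+ c)%g == 1%g).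
  apply/astabP/eqP => [x1 | g1 y yj]; last by rewrite /= apermE xc // g1 perm1.
  apply/permP => y; rewrite perm1; have [yj | yNj] := boolP (y \in Om j).
    by rewrite -xc //; apply: x1.
  exact: out_perm (expg_perm_on j c) yNj.
by rewrite -order_dvdn order_g /dvdn modn_small.
Qed.

Lemma gamma_prod_on_orbit (r : 'rV['F_p]_k) t y : y \in Om t ->
  (\prod_(i < k) g i ^+ r ord0 i)%g y = (g t ^+ r ord0 t)%g y.
Proof.
exact: (prod_perm_on Om_disjoint (fun i => expg_perm_on i (r ord0 i))).
Qed.

Lemma gammaH_decomposition x : x \in H ->
  exists2 v : 'rV['F_p]_k, in_gammaH g H v &
    forall j, {in Om j, x =1 (g j ^+ v ord0 j)%g}.
Proof.
move=> xH; have /fin_all_exists [c xc] := fun j => restr_orbit_expg j xH.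
have xE j : {in Om j, x =1 (g j ^+ (\row_i c i)%R ord0 j)%g}.
  by move=> y yj; rewrite mxE (xc j).
exists (\row_i c i)%R; last exact: xE.
rewrite /in_gammaH.
suff -> : (\prod_(i < k) g i ^+ (\row_i c i)%R ord0 i)%g = x by [].
apply/permP => y; have [t yt] := Om_cover y.
by rewrite (gamma_prod_on_orbit _ yt) (xE t).
Qed.

End CyclicOrbits.

Theorem lemma5p5 (p n k s m : nat) (H : {group {perm 'I_n}})
  (Om : 'I_k -> {set 'I_n}) (g : 'I_k -> {perm 'I_n})
  (M : 'M['F_p]_(s, k)) (u : 'I_k) (f : 'I_k -> 'I_k) :
  prime p ->
  n = (p * k)%N ->
  (* Om_1, ..., Om_k are exactly the H-orbits, pairwise distinct, of size p *)
  injective Om ->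
  (forall x : 'I_n, exists i, x \in Om i) ->
  (forall (i : 'I_k) (x : 'I_n), x \in Om i -> orbit 'P H x = Om i) ->
  (forall i, #|Om i| = p) ->
  (* each G_i = H|_{Om_i} is cyclic of order p *)
  (forall i, cyclic (restrG H (Om i)) /\ #|restrG H (Om i)| = p) ->
  (* ordering: |H|_{Om_1 u ... u Om_s}| = p^s, and |H| = p^s *)
  #|restrG H (\bigcup_(i : 'I_k | (i < s)%N) Om i)| = (p ^ s)%N ->
  #|H| = (p ^ s)%N ->
  (* g_1 generates G_1 *)
  (forall i : 'I_k, val i = 0%N -> <[g i]>%g = restrG H (Om i)) ->
  (* g_j is the conjugate of g_1 by an involution interchanging Om_1 and Om_j
     via a bijection witnessing a permutation isomorphism G_1 -> G_j *)
  (forall i j : 'I_k, val i = 0%N -> val j != 0%N ->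
     exists sigma : {perm 'I_n},
       [/\ (sigma * sigma = 1)%g,
           sigma @: Om i = Om j,
           (forall x, x \notin Om i :|: Om j -> sigma x = x),
           (restrG H (Om i) :^ sigma)%g = restrG H (Om j)
         & g j = (g i ^ sigma)%g]) ->
  (* the rows of M form a basis of gamma(H) *)
  row_free M ->
  (forall v : 'rV['F_p]_k, (v <= M)%MS <-> in_gammaH g H v) ->
  (* standard form: the first s columns of M form I_s *)
  (forall (i : 'I_s) (j : 'I_k), (val j < s)%N -> M i j = ((val i == val j)%:R)%R) ->
  (* m in {s, ..., k-1}, J = {1..m} disjoint-union {u}, f injective on J *)
  (s <= m)%N -> (m < k)%N -> (m <= val u)%N ->
  {in [set j : 'I_k | (val j < m)%N || (j == u)] &, injective f} ->
  (exists i : 'I_s,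
     M i (f u) != 0%R /\
     (forall (j : 'I_k) (r : 'I_s), val r = val j -> (M i (f j) * M r u = 0)%R)) ->
  ~ (exists2 nu : {perm 'I_n}, nu \in 'N(H)%g &
       forall j : 'I_k, ((val j < m)%N || (j == u)) -> nu @: Om j = Om (f j)).
Proof.
move=> p_pr _ Om_inj Om_cover Om_orbit _ restrG_cyc _ _ g0 g_conj _ Mgam Mstd
  sm mk _ _ [i [Mifu Mi_ann]] [nu nuH nuJ].
have sk : (s <= k)%N by apply: leq_trans sm (ltnW mk).
have restrG_card j : #|restrG H (Om j)| = p by case: (restrG_cyc j).
have cycle_g j : <[g j]>%g = restrG H (Om j).
  have [j0 | jn0] := eqVneq (val j) 0%N; first exact: g0.
  have [sigma [_ _ _ Hsigma ->]] :=
    g_conj (Ordinal (leq_ltn_trans (leq0n _) mk)) j erefl jn0.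
  by rewrite cycleJ g0 ?Hsigma.
pose h := (\prod_(t < k) g t ^+ (row i M) ord0 t)%g.
have hH : h \in H by apply/Mgam; apply: row_sub.
have h_astab t : (h \in 'C(Om t | 'P)%g) = (M i t == 0%R).
  apply: (astab_orbit_expg p_pr restrG_card cycle_g) => y yt.
  by rewrite (gamma_prod_on_orbit Om_inj Om_orbit cycle_g _ yt) mxE.
have xH : (h ^ nu^-1)%g \in H by rewrite memJ_norm ?groupV.
have [v vH xv] :=
  gammaH_decomposition p_pr Om_inj Om_cover Om_orbit restrG_card cycle_g xH.
have x_astab j : ((h ^ nu^-1)%g \in 'C(Om j | 'P)%g) = (v ord0 j == 0%R).
  exact: (astab_orbit_expg p_pr restrG_card cycle_g (xv j)).
have transport j : (val j < m)%N || (j == u) ->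
    ((h ^ nu^-1)%g \in 'C(Om j | 'P)%g) = (h \in 'C(Om (f j) | 'P)%g).
  by move=> Jj; rewrite astab_conjgV nuJ.
have vu0 : v ord0 u = 0%R.
  rewrite (std_form_submxE sk Mstd (proj2 (Mgam v) vH)) big1 // => l _.
  have [Mz | Mnz] := eqVneq (M i (f (widen_ord sk l))) 0%R.
    suff /eqP -> : v ord0 (widen_ord sk l) == 0%R by rewrite mul0r.
    by rewrite -x_astab transport ?h_astab ?Mz //= (leq_trans (ltn_ord l) sm).
  have /eqP := Mi_ann (widen_ord sk l) l erefl.
  by rewrite mulf_eq0 (negbTE Mnz) => /eqP ->; rewrite mulr0.
by move: Mifu; rewrite -h_astab -transport ?eqxx ?orbT // x_astab vu0 eqxx.
Qed.
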